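(* For every nonnegative integer $d$ and every $\tau\ge1$, $$\int_0^\infty\left(\int_\tau^x\frac{|H_d(t)|}{t}\,dt\right)\varphi(x)\,dx\le e^{-\tau^2/4}.$$
   Context: $\varphi(x)=\frac{1}{\sqrt{2\pi}}e^{-x^2/2}$ is the standard Gaussian density on $\mathbb{R}$. The Hermite polynomials $(H_k)_{k\ge0}$ are the orthonormal polynomials for $\mathcal{N}(0,1)$ with $\deg H_k=k$ and positive leading coefficient (the probabilist's Hermite polynomials divided by $\sqrt{k!}$). For $x<\tau$ the inner integral $\int_\tau^x$ is the usual oriented integral. *)

From Stdlib Require Import Reals.
From Coquelicot Require Import Coquelicot.
Open Scope R_scope.

Definition phi (x : R) : R := / sqrt (2 * PI) * exp (- x ^ 2 / 2).

(* herm_pair n x = (He_n x, He_(n+1) x), probabilist's Hermite polynomials: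
   He_0 = 1, He_1 = x, He_(k+2) = x He_(k+1) - (k+1) He_k. *)
Fixpoint herm_pair (n : nat) (x : R) : R * R :=
  match n with
  | O => (1, x)
  | S k => let (a, b) := herm_pair k x in (b, x * b - INR (S k) * a)
  end.

Definition He (n : nat) (x : R) : R := fst (herm_pair n x).

(* Orthonormal Hermite polynomials for N(0,1): H_k = He_k / sqrt(k!). *)
Definition H (n : nat) (x : R) : R := He n x / sqrt (INR (Factorial.fact n)).

From Stdlib Require Import Reals Lra Lia Wf_nat Classical_Prop.
From Coquelicot Require Import Coquelicot.
Open Scope R_scope.

(* Let F(x) = int_tau^x |H_d(t)|/t dt.  Then F <= 0 on (0, tau] and F >= 0 on [tau, oo), so
   the integral of F phi over (0, tau] is nonpositive; it is finite because integrating by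
   parts bounds it below by -phi(0) int_0^tau |H_d|.  On [tau, b], integrating by parts against
   the Gaussian tail and using Mills' bound int_x^oo phi <= phi(x)/x gives
     int_tau^b F phi = int_tau^b |H_d(x)|/x * int_x^b phi  <=  int_tau^b |H_d(x)| phi(x) / x^2.
   With e = exp(-tau^2/4), AM-GM and x >= 1 give |H_d|/x^2 <= (e H_d^2 + x/e)/2, so this is at
   most (e/2) int H_d^2 phi + phi(tau)/(2e) <= 7e/16 + e/4, since phi(tau) = phi(0) e^2.
   The bound int_0^B H_d^2 phi <= 7/8 avoids the Gaussian integral: by parts,
     int_0^B He_(n+1)^2 phi = (n+1) int_0^B He_n^2 phi - He_n(B) He_(n+1)(B) phi(B),
   whose boundary term is >= 0 once B^2 >= 4(n+1), and phi(x) <= phi(0) e^(1/2 - x) gives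
   int_0^B phi <= phi(0) e^(1/2) <= 7/8.  Both improper limits exist by monotonicity. *)

(** * Integrals of real functions *)

Lemma continuous_of_ex_derive (f : R -> R) (x : R) : ex_derive f x -> continuous f x.
Proof. exact (ex_derive_continuous f x). Qed.

Lemma continuous_mult_R (f g : R -> R) (x : R) :
  continuous f x -> continuous g x -> continuous (fun y => f y * g y) x.
Proof. exact (continuous_mult f g x). Qed.

Lemma ex_RInt_of_continuous (f : R -> R) (a b : R) :
  (forall x, Rmin a b <= x <= Rmax a b -> continuous f x) -> ex_RInt f a b.
Proof. exact (ex_RInt_continuous f a b). Qed.

Lemma ex_RInt_of_continuous_pos (f : R -> R) (a b : R) :
  (forall x, 0 < x -> continuous f x) -> 0 < a -> 0 < b -> ex_RInt f a b.
Proof.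
  intros Hf Ha Hb; apply ex_RInt_of_continuous; intros x Hx; apply Hf.
  pose proof (Rmin_glb_lt a b 0 Ha Hb); lra.
Qed.

Lemma RInt_scal_R (f : R -> R) (k a b : R) :
  ex_RInt f a b -> RInt (fun x => k * f x) a b = k * RInt f a b.
Proof. exact (RInt_scal f a b k). Qed.

Lemma RInt_plus_R (f g : R -> R) (a b : R) : ex_RInt f a b -> ex_RInt g a b ->
  RInt (fun x => f x + g x) a b = RInt f a b + RInt g a b.
Proof. exact (RInt_plus f g a b). Qed.

Lemma RInt_ext_R (f g : R -> R) (a b : R) :
  (forall x, f x = g x) -> RInt f a b = RInt g a b.
Proof. intro Hfg; apply RInt_ext; intros; apply Hfg. Qed.

Lemma RInt_Chasles_R (f : R -> R) (a b c : R) : ex_RInt f a b -> ex_RInt f b c ->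
  RInt f a b + RInt f b c = RInt f a c.
Proof. exact (RInt_Chasles f a b c). Qed.

Lemma RInt_swap_R (f : R -> R) (a b : R) : ex_RInt f a b -> RInt f b a = - RInt f a b.
Proof. intro Hf; symmetry; exact (opp_RInt_swap f a b Hf). Qed.

Lemma RInt_point_R (f : R -> R) (a : R) : RInt f a a = 0.
Proof. exact (RInt_point a f). Qed.

Lemma RInt_parts (F f U u : R -> R) (a b : R) :
  (forall x, Rmin a b <= x <= Rmax a b -> is_derive F x (f x)) ->
  (forall x, Rmin a b <= x <= Rmax a b -> is_derive U x (u x)) ->
  (forall x, Rmin a b <= x <= Rmax a b -> continuous f x) ->
  (forall x, Rmin a b <= x <= Rmax a b -> continuous u x) ->
  RInt (fun x => F x * u x) a b = F b * U b - F a * U a - RInt (fun x => f x * U x) a b.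
Proof.
  intros HF HU Hf Hu.
  assert (HFc : forall x, Rmin a b <= x <= Rmax a b -> continuous F x)
    by (intros x Hx; apply continuous_of_ex_derive; eexists; apply HF, Hx).
  assert (HUc : forall x, Rmin a b <= x <= Rmax a b -> continuous U x)
    by (intros x Hx; apply continuous_of_ex_derive; eexists; apply HU, Hx).
  assert (Hprod : is_RInt (fun x => f x * U x + F x * u x) a b (F b * U b - F a * U a)).
  { apply (is_RInt_derive (fun x => F x * U x)).
    - intros x Hx; apply (Derive.is_derive_mult F U); auto.
    - intros x Hx; apply (continuous_plus (fun y => f y * U y) (fun y => F y * u y));
        apply continuous_mult_R; auto. }
  apply (is_RInt_unique (V := R_CompleteNormedModule)) in Hprod.
  rewrite RInt_plus_R in Hprod;
    [lra | apply ex_RInt_of_continuous; intros; apply continuous_mult_R; auto ..].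
Qed.

Lemma RInt_le_of_subinterval (f : R -> R) (a b c d : R) :
  (forall x, c <= x <= d -> continuous f x) -> (forall x, c <= x <= d -> 0 <= f x) ->
  c <= a -> a <= b -> b <= d -> RInt f a b <= RInt f c d.
Proof.
  intros Hc Hp Hca Hab Hbd.
  assert (Hex : forall u v, c <= u -> u <= v -> v <= d -> ex_RInt f u v).
  { intros u v Hu Huv Hv; apply ex_RInt_of_continuous; intros x Hx; apply Hc.
    rewrite Rmin_left, Rmax_right in Hx by lra; lra. }
  assert (Hnn : forall u v, c <= u -> u <= v -> v <= d -> 0 <= RInt f u v).
  { intros u v Hu Huv Hv; apply RInt_ge_0; auto; intros x Hx; apply Hp; lra. }
  rewrite <- (RInt_Chasles_R f c a d), <- (RInt_Chasles_R f a b d) by (apply Hex; lra).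
  pose proof (Hnn c a); pose proof (Hnn b d); lra.
Qed.

Lemma is_lub_approx (E : R -> Prop) (L eps : R) :
  is_lub E L -> 0 < eps -> exists y, E y /\ L - eps < y.
Proof.
  intros [_ Hleast] Heps; apply NNPP; intro Hnone.
  assert (L <= L - eps); [|lra].
  apply Hleast; intros y Ey; apply Rnot_lt_le; intro Hlt; apply Hnone; eauto.
Qed.

Lemma filterlim_nondecreasing_pinfty (G : R -> R) (c M : R) :
  (forall x y, c <= x -> x <= y -> G x <= G y) -> (forall x, c <= x -> G x <= M) ->
  exists l, filterlim G (Rbar_locally p_infty) (locally l) /\ l <= M.
Proof.
  intros Hmono Hbound.
  set (E := fun y => exists x, c <= x /\ y = G x).
  destruct (completeness E) as [L HL].
  { exists M; intros y [x [Hx ->]]; auto. }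
  { exists (G c), c; split; [lra | reflexivity]. }
  exists L; split.
  - apply (filterlim_locally (F := Rbar_locally p_infty)); intro eps.
    destruct (is_lub_approx E L eps HL (cond_pos eps)) as [y [[x0 [Hx0 ->]] Hy]].
    exists x0; intros x Hx; change (Rabs (G x - L) < eps).
    assert (G x0 <= G x) by (apply Hmono; lra).
    assert (G x <= L) by (apply HL; exists x; split; [lra | reflexivity]).
    rewrite Rabs_left1; lra.
  - apply HL; intros y [x [Hx ->]]; auto.
Qed.

Lemma filterlim_nondecreasing_at_right (G : R -> R) (c d m : R) : c < d ->
  (forall x y, c < x -> x <= y -> y <= d -> G x <= G y) ->
  (forall x, c < x -> x <= d -> m <= G x) ->
  exists l, filterlim G (at_right c) (locally l) /\ l <= G d.
Proof.
  intros Hcd Hmono Hbound.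
  set (E := fun y => exists x, c < x <= d /\ y = - G x).
  destruct (completeness E) as [L HL].
  { exists (- m); intros y [x [Hx ->]]; pose proof (Hbound x); lra. }
  { exists (- G d), d; split; [lra | reflexivity]. }
  exists (- L); split.
  - apply (filterlim_locally (F := at_right c)); intro eps.
    destruct (is_lub_approx E L eps HL (cond_pos eps)) as [y [[x0 [Hx0 ->]] Hy]].
    assert (Hdist : 0 < x0 - c) by lra.
    exists (mkposreal _ Hdist); intros x Hx Hcx.
    change (Rabs (x - c) < x0 - c) in Hx; change (Rabs (G x - - L) < eps).
    apply Rabs_def2 in Hx.
    assert (G x <= G x0) by (apply Hmono; lra).
    assert (- G x <= L) by (apply HL; exists x; split; [lra | reflexivity]).
    rewrite Rabs_pos_eq; lra.
  - assert (- G d <= L) by (apply HL; exists d; split; [lra | reflexivity]); lra.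
Qed.

Lemma is_RInt_gen_at_point_pinfty (f : R -> R) (a l : R) :
  (forall b, a <= b -> ex_RInt f a b) ->
  filterlim (fun b => RInt f a b) (Rbar_locally p_infty) (locally l) ->
  is_RInt_gen f (at_point a) (Rbar_locally p_infty) l.
Proof.
  intros Hex Hlim P HP.
  apply Filter_prod with (Q := fun x => x = a) (R := fun b => a <= b /\ P (RInt f a b)).
  - reflexivity.
  - apply filter_and; [exists a; intros; lra | apply Hlim, HP].
  - intros x y -> [Hy HPy]; exists (RInt f a y); split; auto.
    apply (RInt_correct (V := R_CompleteNormedModule)), Hex, Hy.
Qed.

Lemma is_RInt_gen_at_right_at_point (f : R -> R) (c b l : R) : c < b ->
  (forall a, c < a -> a <= b -> ex_RInt f a b) ->
  filterlim (fun a => RInt f a b) (at_right c) (locally l) ->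
  is_RInt_gen f (at_right c) (at_point b) l.
Proof.
  intros Hcb Hex Hlim P HP.
  apply Filter_prod with (Q := fun a => (c < a /\ a <= b) /\ P (RInt f a b)) (R := fun x => x = b).
  - apply filter_and; [|apply Hlim, HP].
    assert (Hdist : 0 < b - c) by lra.
    exists (mkposreal _ Hdist); intros x Hx Hcx.
    change (Rabs (x - c) < b - c) in Hx; apply Rabs_def2 in Hx; lra.
  - reflexivity.
  - intros x y [Hx HPx] ->; exists (RInt f x b); split; auto.
    apply (RInt_correct (V := R_CompleteNormedModule)), Hex; tauto.
Qed.

Lemma is_RInt_gen_pinfty_of_nonneg (f : R -> R) (a M : R) :
  (forall x, a <= x -> continuous f x) -> (forall x, a <= x -> 0 <= f x) ->
  (forall b, a <= b -> RInt f a b <= M) ->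
  exists l, is_RInt_gen f (at_point a) (Rbar_locally p_infty) l /\ l <= M.
Proof.
  intros Hc Hnn Hbound.
  assert (Hex : forall u v, a <= u -> u <= v -> ex_RInt f u v).
  { intros u v Hu Huv; apply ex_RInt_of_continuous; intros x Hx; apply Hc.
    rewrite Rmin_left in Hx by lra; lra. }
  destruct (filterlim_nondecreasing_pinfty (fun b => RInt f a b) a M) as [l [Hl HlM]];
    [|exact Hbound|].
  - intros x y Hx Hxy; rewrite <- (RInt_Chasles_R f a x y) by (apply Hex; lra).
    assert (0 <= RInt f x y); [apply RInt_ge_0; auto; intros; apply Hnn; lra | lra].
  - exists l; split; [apply is_RInt_gen_at_point_pinfty; auto; intros; apply Hex; lra | exact HlM].
Qed.

Lemma is_RInt_gen_at_right_of_nonpos (f : R -> R) (c b m : R) : c < b ->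
  (forall x, c < x -> continuous f x) -> (forall x, c < x <= b -> f x <= 0) ->
  (forall a, c < a -> a <= b -> m <= RInt f a b) ->
  exists l, is_RInt_gen f (at_right c) (at_point b) l /\ l <= 0.
Proof.
  intros Hcb Hc Hnp Hbound.
  assert (Hex : forall u v, c < u -> u <= v -> ex_RInt f u v).
  { intros u v Hu Huv; apply ex_RInt_of_continuous; intros x Hx; apply Hc.
    rewrite Rmin_left in Hx by lra; lra. }
  destruct (filterlim_nondecreasing_at_right (fun a => RInt f a b) c b m) as [l [Hl Hlb]];
    [exact Hcb | | exact Hbound |].
  - intros x y Hx Hxy Hy; rewrite <- (RInt_Chasles_R f x y b) by (apply Hex; lra).
    assert (Hopp : 0 <= RInt (fun t => -1 * f t) x y).
    { apply RInt_ge_0; auto.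
      - apply ex_RInt_of_continuous; intros t Ht.
        apply continuous_mult_R; [apply continuous_const|].
        apply Hc; rewrite Rmin_left in Ht; lra.
      - intros t Ht; pose proof (Hnp t); lra. }
    rewrite RInt_scal_R in Hopp by (apply Hex; lra); lra.
  - exists l; split; [apply is_RInt_gen_at_right_at_point; auto; intros; apply Hex; lra|].
    rewrite RInt_point_R in Hlb; exact Hlb.
Qed.

(** * Hermite polynomials *)

Lemma He_succ (n : nat) (x : R) : He (S n) x = snd (herm_pair n x).
Proof. unfold He; simpl; destruct (herm_pair n x); reflexivity. Qed.

Lemma He_rec (n : nat) (x : R) : He (S n) x = x * He n x - INR n * He (pred n) x.
Proof.
  destruct n as [|n]; [unfold He; simpl; ring|].
  rewrite !He_succ; unfold He; simpl.
  destruct (herm_pair n x); reflexivity.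
Qed.

Lemma is_derive_He (n : nat) (x : R) : is_derive (He n) x (INR n * He (pred n) x).
Proof.
  revert x; induction n as [n IH] using lt_wf_ind; intro x.
  destruct n as [|[|n]].
  - apply (is_derive_ext (fun _ => 1)); [reflexivity|].
    simpl; replace (0 * He 0 x) with 0 by ring; auto_derive; auto.
  - apply (is_derive_ext (fun t => t)); [reflexivity|].
    unfold He; simpl; auto_derive; auto; ring.
  - apply (is_derive_ext (fun t => t * He (S n) t - INR (S n) * He n t)).
    { intro t; rewrite (He_rec (S n)); reflexivity. }
    pose proof (IH (S n) ltac:(lia) x) as D1; pose proof (IH n ltac:(lia) x) as D0.
    auto_derive; [split; [eexists; exact D1|split; [eexists; exact D0|easy]]|].
    change (fun t => He (S n) t) with (He (S n)); change (fun t => He n t) with (He n).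
    rewrite (is_derive_unique _ _ _ D1), (is_derive_unique _ _ _ D0).
    simpl pred; rewrite (He_rec n x), !S_INR; destruct n; simpl; ring.
Qed.

Lemma ex_derive_He (n : nat) (x : R) : ex_derive (He n) x.
Proof. eexists; apply is_derive_He. Qed.

Lemma He_mul_He_succ_0 (n : nat) : He n 0 * He (S n) 0 = 0.
Proof.
  rewrite He_succ; unfold He.
  induction n as [|n IH]; [simpl; ring|].
  cbn [herm_pair]; destruct (herm_pair n 0) as [a b]; cbn [fst snd] in *.
  replace (b * (0 * b - INR (S n) * a)) with (- INR (S n) * (a * b)) by ring.
  rewrite IH; ring.
Qed.

Lemma He_pos_ratio (k : nat) (x : R) : 0 < x -> 4 * INR k <= x ^ 2 ->
  0 < He k x /\ x / 2 * He k x <= He (S k) x.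
Proof.
  intro Hx; induction k as [|k IH]; intro Hk; [unfold He; simpl; lra|].
  rewrite S_INR in Hk.
  destruct IH as [Hpos Hratio]; [pose proof (pos_INR k); lra|].
  assert (Hpos' : 0 < He (S k) x) by nra.
  split; [exact Hpos'|].
  rewrite (He_rec (S k)); simpl pred; rewrite S_INR.
  assert (Hprev : (INR k + 1) * (x * He k x) <= (INR k + 1) * (2 * He (S k) x))
    by (apply Rmult_le_compat_l; [pose proof (pos_INR k)|]; lra).
  apply Rmult_le_reg_l with x; [exact Hx|].
  nra.
Qed.

Lemma fact_pos (d : nat) : 0 < INR (Factorial.fact d).
Proof. apply lt_0_INR, Factorial.lt_O_fact. Qed.

Lemma H_sq (d : nat) (t : R) : H d t ^ 2 = He d t ^ 2 / INR (Factorial.fact d).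
Proof.
  pose proof (fact_pos d) as Hfact; unfold H, Rdiv.
  rewrite Rpow_mult_distr, pow_inv, <- (Rsqr_pow2 (sqrt _)), Rsqr_sqrt by lra; reflexivity.
Qed.

Lemma ex_derive_H (d : nat) (x : R) : ex_derive (H d) x.
Proof. unfold H; auto_derive; auto using ex_derive_He. Qed.

Lemma continuous_H (d : nat) (x : R) : continuous (H d) x.
Proof. apply continuous_of_ex_derive, ex_derive_H. Qed.

(** * The Gaussian density *)

Lemma exp_le (x y : R) : x <= y -> exp x <= exp y.
Proof. intros [Hlt | <-]; [left; apply exp_increasing, Hlt | right; reflexivity]. Qed.

Lemma phi_eq (x : R) : phi x = phi 0 * exp (- x ^ 2 / 2).
Proof. unfold phi; replace (- 0 ^ 2 / 2) with 0 by field; rewrite exp_0; ring. Qed.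

Lemma phi_pos (x : R) : 0 < phi x.
Proof.
  apply Rmult_lt_0_compat; [|apply exp_pos].
  apply Rinv_0_lt_compat, sqrt_lt_R0; pose proof PI_RGT_0; lra.
Qed.

Lemma phi_le_phi0 (x : R) : phi x <= phi 0.
Proof.
  rewrite phi_eq; pose proof (phi_pos 0).
  assert (exp (- x ^ 2 / 2) <= 1) by (rewrite <- exp_0; apply exp_le; nra).
  nra.
Qed.

Lemma phi0_le_half : phi 0 <= / 2.
Proof.
  unfold phi; replace (- 0 ^ 2 / 2) with 0 by field; rewrite exp_0, Rmult_1_r.
  apply Rinv_le_contravar; [lra|].
  rewrite <- (sqrt_square 2) at 1 by lra; apply sqrt_le_1_alt.
  pose proof PI2_3_2; lra.
Qed.

Lemma is_derive_phi (x : R) : is_derive phi x (- x * phi x).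
Proof.
  unfold phi; set (c := / sqrt (2 * PI)); auto_derive; auto.
  replace (- (x * (x * 1)) * / 2) with (- x ^ 2 / 2) by field; field.
Qed.

Lemma ex_derive_phi (x : R) : ex_derive phi x.
Proof. eexists; apply is_derive_phi. Qed.

Lemma continuous_phi (x : R) : continuous phi x.
Proof. apply continuous_of_ex_derive, ex_derive_phi. Qed.

Lemma ex_RInt_phi (a b : R) : ex_RInt phi a b.
Proof. apply ex_RInt_of_continuous; intros; apply continuous_phi. Qed.

Ltac smooth_continuity :=
  apply continuous_of_ex_derive; auto_derive; repeat split;
  auto using ex_derive_He, ex_derive_H, ex_derive_phi.

Lemma exp_half_le : exp (/ 2) <= 7 / 4.
Proof.
  assert (exp (/ 2) * exp (/ 2) = exp 1) by (rewrite <- exp_plus; f_equal; field).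
  pose proof exp_le_3; pose proof (exp_pos (/ 2)); nra.
Qed.

Lemma RInt_phi_0_le (B : R) : 0 <= B -> RInt phi 0 B <= 7 / 8.
Proof.
  intro HB.
  set (majorant := fun x => phi 0 * exp (/ 2 - x)).
  assert (Hint : RInt majorant 0 B = phi 0 * exp (/ 2) - phi 0 * exp (/ 2 - B)).
  { apply (is_RInt_unique (V := R_CompleteNormedModule)).
    replace (phi 0 * exp (/ 2) - phi 0 * exp (/ 2 - B))
      with (- phi 0 * exp (/ 2 - B) - - phi 0 * exp (/ 2 - 0)) by (rewrite Rminus_0_r; ring).
    apply (is_RInt_derive (fun x => - phi 0 * exp (/ 2 - x))); intros x _.
    - auto_derive; auto; unfold majorant, Rminus; ring.
    - unfold majorant; smooth_continuity. }
  assert (Hle : RInt phi 0 B <= RInt majorant 0 B).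
  { apply RInt_le; [exact HB | apply ex_RInt_phi | |].
    - apply ex_RInt_of_continuous; intros; unfold majorant; smooth_continuity.
    - intros x _; rewrite phi_eq; pose proof (phi_pos 0).
      apply Rmult_le_compat_l; [lra|]; apply exp_le; pose proof (pow2_ge_0 (x - 1)); nra. }
  pose proof (exp_pos (/ 2 - B)); pose proof (phi_pos 0).
  pose proof phi0_le_half; pose proof exp_half_le.
  nra.
Qed.

Lemma RInt_id_mul_phi (a b : R) : RInt (fun x => x * phi x) a b = phi a - phi b.
Proof.
  apply (is_RInt_unique (V := R_CompleteNormedModule)).
  replace (phi a - phi b) with (- phi b - - phi a) by ring.
  apply (is_RInt_derive (fun x => - phi x)); intros x _; [|smooth_continuity].
  replace (x * phi x) with (- (- x * phi x)) by ring.
  apply (is_derive_opp phi), is_derive_phi.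
Qed.

Lemma RInt_phi_le_mills (t b : R) : 0 < t -> t <= b -> RInt phi t b <= phi t / t.
Proof.
  intros Ht Htb.
  assert (Hle : RInt phi t b <= RInt (fun x => / t * (x * phi x)) t b).
  { apply RInt_le; [exact Htb | apply ex_RInt_phi | |].
    { apply ex_RInt_of_continuous; intros; smooth_continuity. }
    intros x Hx; pose proof (phi_pos x) as Hphi.
    rewrite <- Rmult_assoc, <- (Rmult_1_l (phi x)) at 1.
    apply Rmult_le_compat_r; [lra|].
    rewrite <- (Rinv_l t) by lra; apply Rmult_le_compat_l; [apply Rlt_le, Rinv_0_lt_compat|]; lra. }
  rewrite RInt_scal_R, RInt_id_mul_phi in Hle
    by (apply ex_RInt_of_continuous; intros; smooth_continuity).
  pose proof (phi_pos b) as Hphib; pose proof (Rinv_0_lt_compat t Ht) as Hinv.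
  unfold Rdiv; nra.
Qed.

Lemma is_derive_RInt_phi_upper (a x : R) : is_derive (fun y => RInt phi a y) x (phi x).
Proof.
  apply (is_derive_RInt phi _ a x); [|apply continuous_phi].
  apply filter_forall; intro y; apply (RInt_correct (V := R_CompleteNormedModule)), ex_RInt_phi.
Qed.

Lemma continuous_RInt_phi (c x : R) : continuous (fun y => RInt phi c y) x.
Proof. apply continuous_of_ex_derive; eexists; apply is_derive_RInt_phi_upper. Qed.

Lemma continuous_RInt_phi_lower (c x : R) : continuous (fun y => RInt phi y c) x.
Proof.
  apply continuous_of_ex_derive; eexists.
  apply (is_derive_RInt' phi _ x c); [|apply continuous_phi].
  apply filter_forall; intro y; apply (RInt_correct (V := R_CompleteNormedModule)), ex_RInt_phi.
Qed.

Lemma is_derive_He_phi (n : nat) (x : R) :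
  is_derive (fun t => He n t * phi t) x (- He (S n) x * phi x).
Proof.
  replace (- He (S n) x * phi x) with (INR n * He (pred n) x * phi x + He n x * (- x * phi x))
    by (rewrite He_rec; ring).
  apply (Derive.is_derive_mult (He n) phi); [apply is_derive_He | apply is_derive_phi].
Qed.

Lemma RInt_He_succ_sq_phi (n : nat) (B : R) :
  RInt (fun x => He (S n) x ^ 2 * phi x) 0 B
  = INR (S n) * RInt (fun x => He n x ^ 2 * phi x) 0 B - He n B * He (S n) B * phi B.
Proof.
  assert (Hparts : RInt (fun x => He (S n) x * (- He (S n) x * phi x)) 0 B
    = He (S n) B * (He n B * phi B) - He (S n) 0 * (He n 0 * phi 0)
      - RInt (fun x => INR (S n) * He n x * (He n x * phi x)) 0 B).
  { apply (RInt_parts (He (S n)) (fun x => INR (S n) * He n x) (fun x => He n x * phi x));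
      intros;
      [apply is_derive_He | apply is_derive_He_phi | smooth_continuity ..]. }
  assert (Hex : forall k, ex_RInt (fun x => He k x ^ 2 * phi x) 0 B)
    by (intro k; apply ex_RInt_of_continuous; intros; smooth_continuity).
  rewrite (RInt_ext_R _ (fun x => -1 * (He (S n) x ^ 2 * phi x))),
    (RInt_ext_R (fun x => INR (S n) * He n x * (He n x * phi x))
                (fun x => INR (S n) * (He n x ^ 2 * phi x))),
    !RInt_scal_R in Hparts by (apply Hex || (intros; ring)).
  assert (He (S n) 0 * (He n 0 * phi 0) = 0)
    by (rewrite <- Rmult_assoc, (Rmult_comm (He (S n) 0)), He_mul_He_succ_0; ring).
  lra.
Qed.

Lemma RInt_He_sq_phi_le (n : nat) (B : R) : 0 <= B -> 4 * INR n <= B ^ 2 ->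
  RInt (fun x => He n x ^ 2 * phi x) 0 B <= INR (Factorial.fact n) * RInt phi 0 B.
Proof.
  intro HB; induction n as [|n IH]; intro Hn.
  - rewrite (RInt_ext_R _ phi) by (intro; unfold He; simpl; ring); simpl; lra.
  - rewrite S_INR in Hn; pose proof (pos_INR n).
    assert (HBpos : 0 < B) by nra.
    destruct (He_pos_ratio n B HBpos ltac:(lra)) as [Hpos Hratio].
    assert (Hboundary : 0 <= He n B * He (S n) B * phi B)
      by (pose proof (phi_pos B); apply Rmult_le_pos; [|lra]; nra).
    specialize (IH ltac:(lra)).
    rewrite RInt_He_succ_sq_phi; change (Factorial.fact (S n)) with (S n * Factorial.fact n)%nat.
    rewrite mult_INR, !S_INR.
    nra.
Qed.

Lemma RInt_H_sq_phi_le (d : nat) (a b : R) : 0 <= a -> a <= b ->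
  RInt (fun x => H d x ^ 2 * phi x) a b <= 7 / 8.
Proof.
  intros Ha Hab.
  (* [B^2 >= 4 d] makes the boundary terms of the recursion nonnegative. *)
  set (B := Rmax b (2 * INR d + 2)).
  assert (HbB : b <= B) by apply Rmax_l.
  assert (HdB : 2 * INR d + 2 <= B) by apply Rmax_r.
  pose proof (pos_INR d) as Hd; pose proof (fact_pos d) as Hfact.
  apply Rle_trans with (RInt (fun x => H d x ^ 2 * phi x) 0 B).
  { apply RInt_le_of_subinterval; try lra; intros x _.
    - smooth_continuity.
    - apply Rmult_le_pos; [apply pow2_ge_0 | apply Rlt_le, phi_pos]. }
  rewrite (RInt_ext_R _ (fun x => / INR (Factorial.fact d) * (He d x ^ 2 * phi x)))
    by (intro; rewrite H_sq; unfold Rdiv; ring).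
  rewrite RInt_scal_R by (apply ex_RInt_of_continuous; intros; smooth_continuity).
  pose proof (RInt_He_sq_phi_le d B ltac:(lra) ltac:(nra)).
  pose proof (RInt_phi_0_le B ltac:(lra)).
  apply Rmult_le_reg_l with (INR (Factorial.fact d)); [lra|].
  rewrite <- Rmult_assoc, Rinv_r, Rmult_1_l by lra.
  nra.
Qed.

(** * The inner integral *)

Definition Hkernel (d : nat) (t : R) : R := Rabs (H d t) / t.

Definition Hprimitive (d : nat) (tau x : R) : R := RInt (Hkernel d) tau x.

Lemma continuous_Hkernel (d : nat) (t : R) : 0 < t -> continuous (Hkernel d) t.
Proof.
  intro Ht; apply (continuous_mult_R (fun y => Rabs (H d y)) Rinv).
  - apply continuous_Rabs_comp, continuous_H.
  - apply continuous_Rinv; lra.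
Qed.

Lemma Hkernel_ge0 (d : nat) (t : R) : 0 < t -> 0 <= Hkernel d t.
Proof. intro Ht; apply Rdiv_le_0_compat; [apply Rabs_pos | exact Ht]. Qed.

Lemma ex_RInt_Hkernel (d : nat) (a b : R) : 0 < a -> 0 < b -> ex_RInt (Hkernel d) a b.
Proof. apply ex_RInt_of_continuous_pos, continuous_Hkernel. Qed.

Lemma is_derive_Hprimitive (d : nat) (tau x : R) : 0 < tau -> 0 < x ->
  is_derive (Hprimitive d tau) x (Hkernel d x).
Proof.
  intros Htau Hx; apply (is_derive_RInt (Hkernel d) (Hprimitive d tau) tau x).
  - assert (Hhalf : 0 < x / 2) by lra.
    exists (mkposreal _ Hhalf); intros y Hy; change (Rabs (y - x) < x / 2) in Hy.
    apply Rabs_def2 in Hy.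
    apply (RInt_correct (V := R_CompleteNormedModule)), ex_RInt_Hkernel; lra.
  - apply continuous_Hkernel, Hx.
Qed.

Lemma continuous_Hprimitive_phi (d : nat) (tau x : R) : 0 < tau -> 0 < x ->
  continuous (fun y => Hprimitive d tau y * phi y) x.
Proof.
  intros Htau Hx; apply continuous_mult_R; [|apply continuous_phi].
  apply continuous_of_ex_derive; eexists; apply is_derive_Hprimitive; assumption.
Qed.

Lemma Hprimitive_ge0 (d : nat) (tau x : R) : 0 < tau -> tau <= x -> 0 <= Hprimitive d tau x.
Proof.
  intros Htau Hx; apply RInt_ge_0; [exact Hx | apply ex_RInt_Hkernel; lra |].
  intros t Ht; apply Hkernel_ge0; lra.
Qed.

Lemma Hprimitive_le0 (d : nat) (tau x : R) : 0 < x -> x <= tau -> Hprimitive d tau x <= 0.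
Proof.
  intros Hx Hxtau; unfold Hprimitive.
  rewrite RInt_swap_R by (apply ex_RInt_Hkernel; lra).
  assert (0 <= RInt (Hkernel d) x tau); [|lra].
  apply RInt_ge_0; [exact Hxtau | apply ex_RInt_Hkernel; lra |].
  intros t Ht; apply Hkernel_ge0; lra.
Qed.

Lemma abs_div_sq_le (h e x : R) : 0 < e -> 1 <= x ->
  Rabs h / x ^ 2 <= (e * h ^ 2 + x / e) / 2.
Proof.
  intros He Hx.
  set (u := / x ^ 2).
  assert (Hu : 0 < u <= 1).
  { split; [apply Rinv_0_lt_compat; nra|].
    rewrite <- Rinv_1; apply Rinv_le_contravar; nra. }
  assert (Hsq := pow2_ge_0 (e * Rabs h - u)).
  rewrite <- (pow2_abs h).
  apply Rmult_le_reg_l with (2 * e); [lra|].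
  replace (2 * e * ((e * Rabs h ^ 2 + x / e) / 2)) with (e ^ 2 * Rabs h ^ 2 + x) by (field; lra).
  unfold Rdiv; fold u.
  nra.
Qed.

(* The base point [c] of the primitive of [phi] is free: [c = a] or [c = b] kills a
   boundary term. *)
Lemma RInt_Hprimitive_phi (d : nat) (tau a b c : R) : 0 < tau -> 0 < a -> 0 < b ->
  RInt (fun y => Hprimitive d tau y * phi y) a b
  = Hprimitive d tau b * RInt phi c b - Hprimitive d tau a * RInt phi c a
    - RInt (fun x => Hkernel d x * RInt phi c x) a b.
Proof.
  intros Htau Ha Hb.
  assert (Hpos : forall x, Rmin a b <= x <= Rmax a b -> 0 < x)
    by (intros x Hx; pose proof (Rmin_glb_lt a b 0 Ha Hb); lra).
  apply RInt_parts; intros x Hx; specialize (Hpos x Hx).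
  - apply is_derive_Hprimitive; assumption.
  - apply is_derive_RInt_phi_upper.
  - apply continuous_Hkernel, Hpos.
  - apply continuous_phi.
Qed.

Lemma Hkernel_mul_tail_le (d : nat) (e x b : R) : 0 < e -> 1 <= x -> x <= b ->
  Hkernel d x * RInt phi x b <= e / 2 * (H d x ^ 2 * phi x) + / (2 * e) * (x * phi x).
Proof.
  intros He Hx Hxb.
  pose proof (phi_pos x) as Hphi.
  apply Rle_trans with (Hkernel d x * (phi x / x)).
  - apply Rmult_le_compat_l; [apply Hkernel_ge0; lra | apply RInt_phi_le_mills; lra].
  - replace (Hkernel d x * (phi x / x)) with (Rabs (H d x) / x ^ 2 * phi x)
      by (unfold Hkernel; field; lra).
    replace (e / 2 * (H d x ^ 2 * phi x) + / (2 * e) * (x * phi x))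
      with ((e * H d x ^ 2 + x / e) / 2 * phi x) by (field; lra).
    apply Rmult_le_compat_r; [lra | apply abs_div_sq_le; assumption].
Qed.

Lemma RInt_Hprimitive_phi_tail_le (d : nat) (tau b : R) : 1 <= tau -> tau <= b ->
  RInt (fun y => Hprimitive d tau y * phi y) tau b <= 11 / 16 * exp (- tau ^ 2 / 4).
Proof.
  intros Htau Hb.
  set (e := exp (- tau ^ 2 / 4)).
  assert (He : 0 < e) by apply exp_pos.
  assert (Htail_ex : ex_RInt (fun x => Hkernel d x * RInt phi x b) tau b).
  { apply ex_RInt_of_continuous; intros x Hx; rewrite Rmin_left, Rmax_right in Hx by lra.
    apply continuous_mult_R; [apply continuous_Hkernel; lra | apply continuous_RInt_phi_lower]. }
  assert (Hparts : RInt (fun y => Hprimitive d tau y * phi y) tau b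
                   = RInt (fun x => Hkernel d x * RInt phi x b) tau b).
  { rewrite (RInt_Hprimitive_phi d tau tau b b) by lra.
    unfold Hprimitive at 2; rewrite !RInt_point_R.
    rewrite (RInt_ext_R (fun x => Hkernel d x * RInt phi b x)
                        (fun x => -1 * (Hkernel d x * RInt phi x b))), RInt_scal_R
      by first [exact Htail_ex | intro x; rewrite RInt_swap_R by apply ex_RInt_phi; ring].
    lra. }
  assert (Hmajorant : RInt (fun x => Hkernel d x * RInt phi x b) tau b
    <= e / 2 * RInt (fun x => H d x ^ 2 * phi x) tau b + / (2 * e) * (phi tau - phi b)).
  { rewrite <- RInt_id_mul_phi, <- !RInt_scal_R, <- RInt_plus_R
      by (apply ex_RInt_of_continuous; intros; smooth_continuity).
    apply RInt_le; [exact Hb | exact Htail_ex | |].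
    - apply ex_RInt_of_continuous; intros; smooth_continuity.
    - intros x Hx; apply Hkernel_mul_tail_le; lra. }
  pose proof (RInt_H_sq_phi_le d tau b ltac:(lra) Hb) as Hsq.
  assert (Hphitau : phi tau = phi 0 * (e * e))
    by (rewrite phi_eq; unfold e; rewrite <- exp_plus; f_equal; f_equal; field).
  assert (Hgauss : / (2 * e) * (phi tau - phi b) <= / 4 * e).
  { rewrite Rmult_minus_distr_l, Hphitau.
    replace (/ (2 * e) * (phi 0 * (e * e))) with (phi 0 / 2 * e) by (field; lra).
    assert (0 < / (2 * e) * phi b)
      by (apply Rmult_lt_0_compat; [apply Rinv_0_lt_compat | apply phi_pos]; lra).
    pose proof phi0_le_half; nra. }
  assert (Hherm : e / 2 * RInt (fun x => H d x ^ 2 * phi x) tau b <= e / 2 * (7 / 8))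
    by (apply Rmult_le_compat_l; lra).
  lra.
Qed.

Lemma RInt_Hprimitive_phi_head_ge (d : nat) (tau a : R) : 0 < a -> a <= tau ->
  - RInt (fun x => phi 0 * Rabs (H d x)) 0 tau <= RInt (fun y => Hprimitive d tau y * phi y) a tau.
Proof.
  intros Ha Hatau.
  assert (Habs : forall x, continuous (fun x => phi 0 * Rabs (H d x)) x)
    by (intro x; apply continuous_mult_R;
        [apply continuous_const | apply continuous_Rabs_comp, continuous_H]).
  rewrite (RInt_Hprimitive_phi d tau a tau a) by lra.
  unfold Hprimitive at 1; rewrite !RInt_point_R, Rmult_0_l, Rmult_0_r, Rminus_0_r, Rminus_0_l.
  apply Ropp_le_contravar, Rle_trans with (RInt (fun x => phi 0 * Rabs (H d x)) a tau).
  - apply RInt_le; [exact Hatau | | apply ex_RInt_of_continuous; intros; apply Habs |].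
    + apply ex_RInt_of_continuous; intros x Hx; rewrite Rmin_left, Rmax_right in Hx by lra.
      apply continuous_mult_R; [apply continuous_Hkernel; lra | apply continuous_RInt_phi].
    + intros x Hx.
      assert (Hphi_int : RInt phi a x <= x * phi 0).
      { eapply Rle_trans; [apply Rle_abs|].
        eapply Rle_trans; [apply abs_RInt_le_const; [lra | apply ex_RInt_phi |]|].
        - intros t _; rewrite Rabs_pos_eq by (apply Rlt_le, phi_pos); apply phi_le_phi0.
        - pose proof (phi_pos 0); nra. }
      pose proof (Hkernel_ge0 d x ltac:(lra)) as Hk.
      replace (phi 0 * Rabs (H d x)) with (Hkernel d x * (x * phi 0))
        by (unfold Hkernel; field; lra).
      apply Rmult_le_compat_l; assumption.
  - apply RInt_le_of_subinterval; try lra; intros x _; [apply Habs|].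
    apply Rmult_le_pos; [apply Rlt_le, phi_pos | apply Rabs_pos].
Qed.

Theorem lemmaA11 (d : nat) (tau : R) (htau : 1 <= tau) :
  exists I : R,
    is_RInt_gen
      (fun x => RInt (fun t => Rabs (H d t) / t) tau x * phi x)
      (at_right 0) (Rbar_locally p_infty) I
    /\ I <= exp (- tau ^ 2 / 4).
Proof.
  set (f := fun x => Hprimitive d tau x * phi x).
  change (fun x => RInt (fun t => Rabs (H d t) / t) tau x * phi x) with f.
  assert (Hcont : forall x, 0 < x -> continuous f x)
    by (intros; apply continuous_Hprimitive_phi; lra).
  destruct (is_RInt_gen_at_right_of_nonpos f 0 tau (- RInt (fun x => phi 0 * Rabs (H d x)) 0 tau))
    as [l1 [Hl1 Hl1_le]]; [lra | exact Hcont | | apply RInt_Hprimitive_phi_head_ge |].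
  { intros x Hx; pose proof (Hprimitive_le0 d tau x ltac:(lra) ltac:(lra)); pose proof (phi_pos x).
    unfold f; nra. }
  destruct (is_RInt_gen_pinfty_of_nonneg f tau (11 / 16 * exp (- tau ^ 2 / 4)))
    as [l2 [Hl2 Hl2_le]];
    [intros; apply Hcont; lra | | intros b Hb; apply RInt_Hprimitive_phi_tail_le; lra |].
  { intros x Hx; pose proof (Hprimitive_ge0 d tau x ltac:(lra) Hx); pose proof (phi_pos x).
    unfold f; nra. }
  exists (l1 + l2); split.
  - exact (is_RInt_gen_Chasles f tau l1 l2 Hl1 Hl2).
  - pose proof (exp_pos (- tau ^ 2 / 4)); lra.
Qed.
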